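(* Let $\alpha,\gamma,\mu,\delta,\rho>0$, $\beta=\alpha+\gamma$, and consider \[ \dot P=P\big[(\beta-\mu)-2\beta P+(\delta-\beta)A\big],\qquad \dot A=-(2\delta P+\rho)A \] on $\mathcal F=\{(P,A): P\ge0,\ A\ge0,\ 2P+A\le1\}$. (i) If $\beta\le\mu$, then $E_0=(0,0)$ is globally asymptotically stable on $\mathcal F$: $P(t)\to0$ and $A(t)\to0$ for all initial conditions in $\mathcal F$. (ii) If $\beta>\mu$, then the edge $\{P=0\}$ is forward invariant; every initial condition with $P_0=0$ gives $P(t)\equiv0$, $A(t)\to0$, so the trajectory converges to $E_0$; every initial condition in $\mathcal F$ with $P_0>0$ converges to $E_1=\big(\tfrac12(1-\mu/\beta),0\big)$. In this regime $E_0$ is a saddle and $E_1$ is locally asymptotically stable. *)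

From Stdlib Require Import Reals Lra.
From Coquelicot Require Import Coquelicot.
Open Scope R_scope.

Definition fP (beta mu delta : R) (p a : R) : R :=
  p * ((beta - mu) - 2 * beta * p + (delta - beta) * a).
Definition fA (delta rho : R) (p a : R) : R :=
  - (2 * delta * p + rho) * a.

Definition in_F (p a : R) : Prop := 0 <= p /\ 0 <= a /\ 2 * p + a <= 1.

Definition is_solution (beta mu delta rho : R) (P A : R -> R) : Prop :=
  forall t, 0 <= t ->
    is_derive P t (fP beta mu delta (P t) (A t)) /\
    is_derive A t (fA delta rho (P t) (A t)).

Definition dist2 (p a q b : R) : R := sqrt ((p - q) ^ 2 + (a - b) ^ 2).

Definition jac11 (f1 : R -> R -> R) p0 a0 := Derive (fun p => f1 p a0) p0.
Definition jac12 (f1 : R -> R -> R) p0 a0 := Derive (fun a => f1 p0 a) a0.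

Definition is_eigenvalue2 (j11 j12 j21 j22 lam : R) : Prop :=
  exists v1 v2 : R, (v1 <> 0 \/ v2 <> 0) /\
    j11 * v1 + j12 * v2 = lam * v1 /\ j21 * v1 + j22 * v2 = lam * v2.

Definition is_saddle (f1 f2 : R -> R -> R) (p0 a0 : R) : Prop :=
  f1 p0 a0 = 0 /\ f2 p0 a0 = 0 /\
  exists l1 l2, 0 < l1 /\ l2 < 0 /\
    is_eigenvalue2 (jac11 f1 p0 a0) (jac12 f1 p0 a0)
                   (jac11 f2 p0 a0) (jac12 f2 p0 a0) l1 /\
    is_eigenvalue2 (jac11 f1 p0 a0) (jac12 f1 p0 a0)
                   (jac11 f2 p0 a0) (jac12 f2 p0 a0) l2.

Definition lyap_stable (beta mu delta rho : R) (p0 a0 : R) : Prop :=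
  forall eps, 0 < eps -> exists d, 0 < d /\
     forall P A, is_solution beta mu delta rho P A -> in_F (P 0) (A 0) ->
       dist2 (P 0) (A 0) p0 a0 < d ->
       forall t, 0 <= t -> dist2 (P t) (A t) p0 a0 < eps.

Definition loc_asymp_stable (beta mu delta rho : R) (p0 a0 : R) : Prop :=
  lyap_stable beta mu delta rho p0 a0 /\
  (exists eta, 0 < eta /\
     forall P A, is_solution beta mu delta rho P A -> in_F (P 0) (A 0) ->
       dist2 (P 0) (A 0) p0 a0 < eta ->
       is_lim P p_infty p0 /\ is_lim A p_infty a0).

Definition glob_asymp_stable (beta mu delta rho : R) (p0 a0 : R) : Prop :=
  lyap_stable beta mu delta rho p0 a0 /\
  (forall P A, is_solution beta mu delta rho P A -> in_F (P 0) (A 0) ->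
       is_lim P p_infty p0 /\ is_lim A p_infty a0).

From Stdlib Require Import Reals Lra Psatz.
From Coquelicot Require Import Coquelicot.
Open Scope R_scope.

(* P and A solve linear equations x' = g(t) x, so they keep their signs, and 2P + A - 1
   satisfies (2P + A - 1)' <= -2 beta P (2P + A - 1); hence F is forward invariant and
   A' <= - rho A makes A decay exponentially.
   If beta <= mu, V = P exp (|delta - beta| A / rho) satisfies V' <= -2 beta P V <= - c V^2:
   V is nonincreasing (stability of E0) and V = O(1/t) (attraction).
   If beta > mu, write p* = (1 - mu/beta)/2. As soon as |delta - beta| A <= (beta - mu)/2, the
   function W = (1/P - 1/p* )^2 + m A^2, with a suitable weight m, satisfies W' <= - lam W;
   since |P - p*| <= (p*/2) |1/P - 1/p*| on F, this gives convergence of P to p* when P(0) > 0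
   and, starting near E1, stability of E1. The Jacobian at E0 is diag (beta - mu, - rho). *)

Ltac derive_from_hyps :=
  auto_derive; repeat (erewrite is_derive_unique by eassumption);
  try (repeat split; try (eexists; eassumption)).

Lemma ex_derive_continuous_R (f : R -> R) (x : R) : ex_derive f x -> continuous f x.
Proof. apply (ex_derive_continuous (K := R_AbsRing) (V := R_NormedModule)). Qed.

Lemma exp_le_exp_of_le (x y : R) : x <= y -> exp x <= exp y.
Proof. intros [Hlt | ->]; [left; apply exp_increasing, Hlt | right; reflexivity]. Qed.

Lemma derive_nonpos_le (f df : R -> R) (a b : R) : a <= b ->
  (forall x, a <= x <= b -> is_derive f x (df x)) ->
  (forall x, a <= x <= b -> df x <= 0) -> f b <= f a.
Proof.
  intros Hab Hf Hdf.
  destruct (MVT_gen f a b df) as [c [Hc Hfc]];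
    rewrite ?Rmin_left, ?Rmax_right in * by lra.
  - intros x Hx; apply Hf; lra.
  - intros x Hx; apply continuity_pt_filterlim, ex_derive_continuous_R; exists (df x); apply Hf; lra.
  - assert (df c <= 0) by (apply Hdf; lra); nra.
Qed.

Lemma gronwall_le (y dy g G : R -> R) (T : R) :
  (forall t, T <= t -> is_derive y t (dy t)) ->
  (forall t, T <= t -> is_derive G t (g t)) ->
  (forall t, T <= t -> dy t <= g t * y t) ->
  forall t, T <= t -> y t <= y T * exp (G t - G T).
Proof.
  intros Hy HG Hdy t Ht.
  assert (Hmono : y t * exp (- G t) <= y T * exp (- G T)).
  { apply (derive_nonpos_le (fun s => y s * exp (- G s))
      (fun s => exp (- G s) * (dy s - g s * y s))); [lra| |].
    - intros s Hs; specialize (Hy s ltac:(lra)); specialize (HG s ltac:(lra)).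
      derive_from_hyps; ring.
    - intros s Hs; specialize (Hdy s ltac:(lra)).
      assert (0 < exp (- G s)) by apply exp_pos; nra. }
  replace (y t) with (y t * exp (- G t) * exp (G t))
    by (rewrite Rmult_assoc, <- exp_plus, Rplus_opp_l, exp_0; ring).
  replace (y T * exp (G t - G T)) with (y T * exp (- G T) * exp (G t))
    by (rewrite Rmult_assoc, <- exp_plus; f_equal; f_equal; ring).
  apply Rmult_le_compat_r; [left; apply exp_pos | exact Hmono].
Qed.

Lemma exists_antiderivative (h : R -> R) : (forall t, 0 <= t -> continuous h t) ->
  exists H, forall t, 0 <= t -> is_derive H t (h t).
Proof.
  intros Hh.
  (* extend [h] continuously to the left of 0 so that [RInt] is defined everywhere *)
  set (h0 := fun t => h (Rmax t 0)).
  assert (Hh0 : forall t, continuous h0 t).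
  { intros t; apply (continuous_comp (fun t => Rmax t 0) h); [|apply Hh, Rmax_r].
    apply continuity_pt_filterlim, continuity_pt_ext with (f := fun t => (t + Rabs t) / 2).
    - intros s; unfold Rmax; destruct (Rle_dec s 0).
      + rewrite Rabs_left1; lra.
      + rewrite Rabs_right; lra.
    - apply continuity_pt_div; [| apply continuity_pt_const; now intros | lra].
      apply continuity_pt_plus; [apply continuity_pt_id | apply Rcontinuity_abs]. }
  exists (fun t => RInt h0 0 t); intros t Ht.
  replace (h t) with (h0 t) by (unfold h0; now rewrite Rmax_left by lra).
  apply (is_derive_RInt h0 _ 0); [|apply Hh0].
  apply filter_forall; intros b; apply (RInt_correct h0), (ex_RInt_continuous h0); intros; apply Hh0.
Qed.

Lemma linear_differential_inequality (y dy g : R -> R) :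
  (forall t, 0 <= t -> continuous g t) ->
  (forall t, 0 <= t -> is_derive y t (dy t)) ->
  (forall t, 0 <= t -> dy t <= g t * y t) ->
  forall t, 0 <= t -> exists c, 0 < c /\ y t <= y 0 * c.
Proof.
  intros Hg Hy Hdy t Ht.
  destruct (exists_antiderivative g Hg) as [G HG].
  exists (exp (G t - G 0)); split; [apply exp_pos|].
  exact (gronwall_le y dy g G 0 Hy HG Hdy t Ht).
Qed.

Lemma linear_ode_sign (y g : R -> R) :
  (forall t, 0 <= t -> continuous g t) ->
  (forall t, 0 <= t -> is_derive y t (g t * y t)) ->
  forall t, 0 <= t ->
    (0 <= y 0 -> 0 <= y t) /\ (0 < y 0 -> 0 < y t) /\ (y 0 = 0 -> y t = 0).
Proof.
  intros Hg Hy t Ht.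
  destruct (linear_differential_inequality y _ g Hg Hy (fun s _ => Rle_refl _) t Ht)
    as [c [Hc Hup]].
  destruct (linear_differential_inequality (fun s => - y s) (fun s => - (g s * y s)) g Hg)
    with (t := t) as [c' [Hc' Hlow]]; auto.
  - intros s Hs; apply (is_derive_opp y), Hy, Hs.
  - intros s _; lra.
  - repeat split; intros; nra.
Qed.

Lemma riccati_le (y dy : R -> R) (c : R) : 0 < c ->
  (forall t, 0 <= t -> is_derive y t (dy t)) ->
  (forall t, 0 <= t -> 0 < y t) ->
  (forall t, 0 <= t -> dy t <= - c * y t ^ 2) ->
  forall t, 0 < t -> y t <= / (c * t).
Proof.
  intros Hc Hy Hpos Hdy t Ht.
  assert (Hmono : c * t - / y t <= c * 0 - / y 0).
  { apply (derive_nonpos_le (fun s => c * s - / y s) (fun s => c + dy s / y s ^ 2)); [lra| |].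
    - intros s Hs; specialize (Hy s ltac:(lra)); specialize (Hpos s ltac:(lra)).
      derive_from_hyps; [lra | field; lra].
    - intros s Hs; specialize (Hdy s ltac:(lra)); specialize (Hpos s ltac:(lra)).
      assert (dy s / y s ^ 2 <= - c) by (apply Rle_div_l; nra); lra. }
  assert (0 < / y 0) by (apply Rinv_0_lt_compat, Hpos; lra).
  rewrite <- (Rinv_inv (y t)); apply Rinv_le_contravar; nra.
Qed.

Lemma is_lim_of_sqr_sub_le (f g : R -> R) (l T : R) :
  (forall t, T <= t -> (f t - l) ^ 2 <= g t) -> is_lim g p_infty 0 ->
  is_lim f p_infty l.
Proof.
  intros Hfg Hg; apply is_lim_spec; intros eps.
  apply is_lim_spec in Hg.
  destruct (Hg (mkposreal _ (pow_lt eps 2 (cond_pos eps)))) as [M HM]; simpl in HM.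
  exists (Rmax M T); intros t Ht.
  specialize (HM t ltac:(generalize (Rmax_l M T); lra)).
  specialize (Hfg t ltac:(generalize (Rmax_r M T); lra)).
  rewrite Rminus_0_r in HM; apply Rabs_def2 in HM.
  assert (0 < eps) by apply cond_pos.
  rewrite <- (Rabs_right eps) by lra; apply Rsqr_lt_abs_0; unfold Rsqr; nra.
Qed.

Lemma is_lim_exp_decay (c lam : R) : 0 < lam ->
  is_lim (fun t => c * exp (- lam * t)) p_infty 0.
Proof.
  intros Hlam; replace (Finite 0) with (Rbar_mult c 0) by (simpl; f_equal; ring).
  apply is_lim_scal_l, (is_lim_comp exp (fun t => - lam * t) p_infty 0 m_infty).
  - exact is_lim_exp_m.
  - replace m_infty with (Rbar_mult (- lam) p_infty); [apply is_lim_scal_l, is_lim_id|].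
    simpl; case Rle_dec; intros; [exfalso; lra | reflexivity].
  - exists 0; intros; discriminate.
Qed.

Lemma is_lim_inv_decay (c : R) : is_lim (fun t => c * / t) p_infty 0.
Proof.
  replace (Finite 0) with (Rbar_mult c 0) by (simpl; f_equal; ring).
  apply is_lim_scal_l, (is_lim_inv (fun t => t) p_infty p_infty); [apply is_lim_id | discriminate].
Qed.

Lemma dist2_lt_abs_sub (p a q b d : R) :
  dist2 p a q b < d -> Rabs (p - q) < d /\ Rabs (a - b) < d.
Proof.
  unfold dist2; intros Hd; destruct (sqrt_plus_sqr (p - q) (a - b)) as [Hmax _].
  generalize (Rmax_l (Rabs (p - q)) (Rabs (a - b))) (Rmax_r (Rabs (p - q)) (Rabs (a - b))).
  lra.
Qed.

Lemma dist2_lt_of_sqr_le (p a q b K d eps : R) : 0 <= K -> 0 < eps ->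
  0 < d <= eps / (K + 1) -> (p - q) ^ 2 + (a - b) ^ 2 <= K * d ^ 2 -> dist2 p a q b < eps.
Proof.
  intros HK Heps [Hd0 Hd] Hsq; unfold dist2.
  assert (Hd' : d * (K + 1) <= eps).
  { replace eps with (eps / (K + 1) * (K + 1)) by (field; lra); apply Rmult_le_compat_r; lra. }
  assert ((d * (K + 1)) ^ 2 <= eps ^ 2) by (apply pow_incr; nra).
  assert (K * d ^ 2 < (d * (K + 1)) ^ 2) by (clear - HK Hd0; nra).
  rewrite <- (sqrt_pow2 eps) by lra; apply sqrt_lt_1_alt; split; [|lra].
  generalize (pow2_ge_0 (p - q)) (pow2_ge_0 (a - b)); lra.
Qed.

Lemma sqr_sub_le_sqr_inv_sub (p q : R) : 0 < q -> 0 < p <= 1 / 2 ->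
  (p - q) ^ 2 <= (q / 2) ^ 2 * (/ p - / q) ^ 2.
Proof.
  intros Hq Hp.
  replace ((p - q) ^ 2) with ((p * q) ^ 2 * (/ p - / q) ^ 2) by (field; lra).
  apply Rmult_le_compat_r; [apply pow2_ge_0 | apply pow_incr; nra].
Qed.

Lemma sqr_inv_sub_le_sqr_sub (p q : R) : 0 < q -> q / 2 <= p ->
  (/ p - / q) ^ 2 <= (2 / q ^ 2) ^ 2 * (p - q) ^ 2.
Proof.
  intros Hq Hp.
  replace ((/ p - / q) ^ 2) with ((/ (p * q)) ^ 2 * (p - q) ^ 2) by (field; lra).
  replace (2 / q ^ 2) with (/ (q ^ 2 / 2)) by (field; lra).
  apply Rmult_le_compat_r; [apply pow2_ge_0|].
  apply pow_incr; split; [left; apply Rinv_0_lt_compat; nra|].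
  apply Rinv_le_contravar; nra.
Qed.

Lemma mul_div_succ_le (L c : R) : 0 <= L -> 0 <= c -> L * (c / (L + 1)) <= c.
Proof.
  intros HL Hc; replace (L * (c / (L + 1))) with (c - c / (L + 1)) by (field; lra).
  assert (0 <= c / (L + 1)) by (apply Rdiv_le_0_compat; lra); lra.
Qed.

(* The weight [exp (|delta - beta| a / rho)] absorbs the [(delta - beta) A] term of [P'/P],
   since [A' <= - rho A]. *)
Definition E0_lyapunov (beta delta rho p a : R) : R := p * exp (Rabs (delta - beta) / rho * a).

Lemma E0_lyapunov_bounds (beta delta rho p a : R) : 0 < rho -> 0 <= p -> 0 <= a <= 1 ->
  p <= E0_lyapunov beta delta rho p a <= p * exp (Rabs (delta - beta) / rho).
Proof.
  intros Hrho Hp Ha; unfold E0_lyapunov.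
  assert (HL : 0 <= Rabs (delta - beta) / rho) by (apply Rdiv_le_0_compat; [apply Rabs_pos | exact Hrho]).
  split.
  - assert (1 <= exp (Rabs (delta - beta) / rho * a)); [|nra].
    rewrite <- exp_0; apply exp_le_exp_of_le, Rmult_le_pos; lra.
  - apply Rmult_le_compat_l, exp_le_exp_of_le; [exact Hp|].
    rewrite <- (Rmult_1_r (Rabs (delta - beta) / rho)) at 2; apply Rmult_le_compat_l; lra.
Qed.

Lemma E0_lyapunov_rate_le (beta mu delta rho p a : R) :
  beta <= mu -> 0 <= delta -> 0 < rho -> 0 <= p -> 0 <= a ->
  (beta - mu) - 2 * beta * p + (delta - beta) * a
    - Rabs (delta - beta) / rho * (2 * delta * p + rho) * a <= - 2 * beta * p.
Proof.
  intros Hle Hdelta Hrho Hp Ha.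
  assert (HL : 0 <= Rabs (delta - beta) / rho) by (apply Rdiv_le_0_compat; [apply Rabs_pos | exact Hrho]).
  assert (0 <= Rabs (delta - beta) / rho * (2 * delta * p) * a)
    by (apply Rmult_le_pos; [apply Rmult_le_pos; nra | exact Ha]).
  assert ((delta - beta) * a <= Rabs (delta - beta) * a) by (apply Rmult_le_compat_r; [exact Ha | apply Rle_abs]).
  replace (Rabs (delta - beta) / rho * (2 * delta * p + rho) * a)
    with (Rabs (delta - beta) / rho * (2 * delta * p) * a + Rabs (delta - beta) * a) by (field; lra).
  lra.
Qed.

Definition pstar (beta mu : R) : R := (1 - mu / beta) / 2.

Definition E1_weight (beta mu delta rho : R) : R :=
  2 * ((delta - beta) / pstar beta mu) ^ 2 / ((beta - mu) * rho) + 1.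

Definition E1_lyapunov (beta mu delta rho p a : R) : R :=
  (/ p - / pstar beta mu) ^ 2 + E1_weight beta mu delta rho * a ^ 2.

Definition E1_rate (beta mu rho : R) : R := Rmin ((beta - mu) / 2) rho.

Lemma pstar_bounds (beta mu : R) : 0 <= mu < beta -> 0 < pstar beta mu <= 1 / 2.
Proof.
  intros Hmu; unfold pstar; split.
  - replace ((1 - mu / beta) / 2) with ((beta - mu) / (2 * beta)) by (field; lra).
    apply Rdiv_lt_0_compat; lra.
  - assert (0 <= mu / beta) by (apply Rdiv_le_0_compat; lra); lra.
Qed.

Lemma E1_weight_ge1 (beta mu delta rho : R) : mu < beta -> 0 < rho -> 1 <= E1_weight beta mu delta rho.
Proof.
  intros Hmu Hrho; unfold E1_weight.
  assert (0 <= 2 * ((delta - beta) / pstar beta mu) ^ 2 / ((beta - mu) * rho)); [|lra].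
  apply Rdiv_le_0_compat; [generalize (pow2_ge_0 ((delta - beta) / pstar beta mu)); lra | nra].
Qed.

Lemma E1_lyapunov_le_near (beta mu delta rho p a d : R) : 0 <= mu < beta -> 0 < rho ->
  pstar beta mu / 2 <= p -> Rabs (p - pstar beta mu) <= d -> 0 <= a <= d ->
  E1_lyapunov beta mu delta rho p a
    <= ((2 / pstar beta mu ^ 2) ^ 2 + E1_weight beta mu delta rho) * d ^ 2.
Proof.
  intros Hmu Hrho Hp Hpd Had; unfold E1_lyapunov.
  assert (Hq := pstar_bounds beta mu Hmu); set (q := pstar beta mu) in *.
  assert (Hm := E1_weight_ge1 beta mu delta rho (proj2 Hmu) Hrho).
  assert ((/ p - / q) ^ 2 <= (2 / q ^ 2) ^ 2 * (p - q) ^ 2) by (apply sqr_inv_sub_le_sqr_sub; lra).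
  assert ((p - q) ^ 2 <= d ^ 2) by (rewrite <- pow2_abs; apply pow_incr; split; [apply Rabs_pos | lra]).
  assert (a ^ 2 <= d ^ 2) by (apply pow_incr; lra).
  generalize (pow2_ge_0 (2 / q ^ 2)); nra.
Qed.

(* The weight [m] is chosen so that the cross term is absorbed by completing the square:
   [kappa/2 (X + 2 b a / kappa)^2 + rho a^2 >= 0]. *)
Lemma quadratic_dissipation (kappa rho k b m delta p a X : R) :
  0 < kappa -> 0 < rho -> kappa / 2 <= k -> 0 <= delta -> 0 <= p -> 0 <= a ->
  m = 2 * b ^ 2 / (kappa * rho) + 1 ->
  2 * X * (- k * X - b * a) + 2 * m * a * (- (2 * delta * p + rho) * a)
    <= - Rmin (kappa / 2) rho * (X ^ 2 + m * a ^ 2).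
Proof.
  intros Hkappa Hrho Hk Hdelta Hp Ha Hm.
  assert (Hl1 := Rmin_l (kappa / 2) rho); assert (Hl2 := Rmin_r (kappa / 2) rho).
  set (lam := Rmin (kappa / 2) rho) in *.
  assert (Hlam : 0 < lam) by (apply Rmin_glb_lt; lra).
  assert (Hm1 : 1 <= m).
  { rewrite Hm; assert (0 <= 2 * b ^ 2 / (kappa * rho)); [|lra].
    apply Rdiv_le_0_compat; [generalize (pow2_ge_0 b); lra | nra]. }
  assert (Hsq : kappa / 2 * (X + 2 * b / kappa * a) ^ 2
    = kappa / 2 * X ^ 2 + 2 * b * a * X + (m * rho - rho) * a ^ 2) by (rewrite Hm; field; lra).
  assert (0 <= kappa / 2 * (X + 2 * b / kappa * a) ^ 2)
    by (apply Rmult_le_pos; [lra | apply pow2_ge_0]).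
  assert (HX : 0 <= X ^ 2) by apply pow2_ge_0.
  assert (Ha2 : 0 <= a ^ 2) by apply pow2_ge_0.
  assert (kappa * X ^ 2 <= 2 * k * X ^ 2) by nra.
  assert (lam * X ^ 2 <= kappa / 2 * X ^ 2) by nra.
  assert (lam * (m * a ^ 2) <= rho * (m * a ^ 2)) by (apply Rmult_le_compat_r; nra).
  assert (0 <= m * delta * p * a ^ 2) by (repeat apply Rmult_le_pos; lra).
  assert (0 <= rho * a ^ 2) by nra.
  nra.
Qed.

Section Solution.

Variables (beta mu delta rho : R) (P A : R -> R).
Hypotheses (Hmu : 0 <= mu) (Hdelta : 0 <= delta) (Hrho : 0 < rho).
Hypothesis Hsol : is_solution beta mu delta rho P A.
Hypothesis HF0 : in_F (P 0) (A 0).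

Lemma continuous_along_solution (c0 c1 c2 : R) t : 0 <= t ->
  continuous (fun s => c0 + c1 * P s + c2 * A s) t.
Proof.
  intros Ht; destruct (Hsol t Ht).
  apply ex_derive_continuous_R; auto_derive; repeat split; eexists; eassumption.
Qed.

Lemma P_sign t : 0 <= t ->
  (0 <= P 0 -> 0 <= P t) /\ (0 < P 0 -> 0 < P t) /\ (P 0 = 0 -> P t = 0).
Proof.
  apply (linear_ode_sign P _ (continuous_along_solution (beta - mu) (- 2 * beta) (delta - beta))).
  intros s Hs; replace (_ * P s) with (fP beta mu delta (P s) (A s)) by (unfold fP; ring); apply Hsol, Hs.
Qed.

Lemma A_sign t : 0 <= t -> 0 <= A t.
Proof.
  intros Ht; apply (linear_ode_sign A _ (continuous_along_solution (- rho) (- 2 * delta) 0)); auto.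
  - intros s Hs; replace (_ * A s) with (fA delta rho (P s) (A s)) by (unfold fA; ring); apply Hsol, Hs.
  - apply HF0.
Qed.

Lemma P_nonneg t : 0 <= t -> 0 <= P t.
Proof. intros Ht; apply (P_sign t Ht), HF0. Qed.

Lemma A_le_exp t : 0 <= t -> A t <= A 0 * exp (- rho * t).
Proof.
  intros Ht.
  replace (- rho * t) with (- rho * t - - rho * 0) by ring.
  apply (gronwall_le A (fun s => fA delta rho (P s) (A s)) (fun _ => - rho) (fun s => - rho * s));
    auto; intros s Hs.
  - apply Hsol, Hs.
  - derive_from_hyps; ring.
  - unfold fA; generalize (P_nonneg s Hs) (A_sign s Hs); intros HP HA.
    assert (0 <= delta * P s * A s) by (apply Rmult_le_pos; [apply Rmult_le_pos|]; assumption).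
    lra.
Qed.

Lemma A_le_A0 t : 0 <= t -> A t <= A 0.
Proof.
  intros Ht; assert (exp (- rho * t) <= 1) by (rewrite <- exp_0; apply exp_le_exp_of_le; nra).
  generalize (A_le_exp t Ht) (proj1 (proj2 HF0)); nra.
Qed.

Lemma in_F_solution t : 0 <= t -> in_F (P t) (A t).
Proof.
  intros Ht; split; [apply P_nonneg, Ht | split; [apply A_sign, Ht |]].
  (* (2P + A - 1)' = -2 beta P (2P + A - 1) - 2 mu P - rho A *)
  destruct (linear_differential_inequality (fun s => 2 * P s + A s - 1)
    (fun s => 2 * fP beta mu delta (P s) (A s) + fA delta rho (P s) (A s))
    _ (continuous_along_solution 0 (- 2 * beta) 0)) with (t := t) as [c [Hc Hle]]; auto.
  - intros s Hs; destruct (Hsol s Hs); derive_from_hyps; ring.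
  - intros s Hs; unfold fP, fA; generalize (P_nonneg s Hs) (A_sign s Hs); nra.
  - destruct HF0 as [_ [_ HS0]]; nra.
Qed.

Lemma is_lim_A : is_lim A p_infty 0.
Proof.
  apply (is_lim_of_sqr_sub_le A (fun t => A 0 * exp (- rho * t)) 0 0); [|apply is_lim_exp_decay, Hrho].
  intros t Ht; destruct (in_F_solution t Ht) as [_ [HA HS]].
  generalize (A_le_exp t Ht) (P_nonneg t Ht); nra.
Qed.

Lemma is_lim_P_of_P0_eq_0 : P 0 = 0 -> is_lim P p_infty 0.
Proof.
  intros HP0; apply (is_lim_of_sqr_sub_le P (fun _ => 0) 0 0); [|apply is_lim_const].
  intros t Ht; rewrite (proj2 (proj2 (P_sign t Ht)) HP0); simpl; lra.
Qed.

Section Extinction.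

Hypotheses (Hbeta : 0 < beta) (Hle : beta <= mu).

Let V s := E0_lyapunov beta delta rho (P s) (A s).
Let rate s := (beta - mu) - 2 * beta * P s + (delta - beta) * A s
  - Rabs (delta - beta) / rho * (2 * delta * P s + rho) * A s.

Lemma is_derive_E0_lyapunov t : 0 <= t -> is_derive V t (V t * rate t).
Proof.
  intros Ht; destruct (Hsol t Ht); unfold V, rate, E0_lyapunov.
  derive_from_hyps; unfold fP, fA; field; lra.
Qed.

Lemma E0_lyapunov_derive_le t : 0 <= t ->
  V t * rate t <= - (2 * beta / exp (Rabs (delta - beta) / rho)) * V t ^ 2.
Proof.
  intros Ht; destruct (in_F_solution t Ht) as [HP [HA HS]].
  assert (Hrate := E0_lyapunov_rate_le beta mu delta rho (P t) (A t) Hle Hdelta Hrho HP HA).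
  fold (rate t) in Hrate.
  destruct (E0_lyapunov_bounds beta delta rho (P t) (A t) Hrho HP ltac:(lra)) as [HPV HC]; fold (V t) in HPV, HC.
  set (C := exp (Rabs (delta - beta) / rho)) in HC |- *.
  assert (0 < C) by apply exp_pos.
  replace (- (2 * beta / C) * V t ^ 2) with (- 2 * beta * (V t / C) * V t) by (field; lra).
  assert (V t / C <= P t) by (apply Rle_div_l; lra).
  assert (V t * rate t <= V t * (- 2 * beta * P t)) by (apply Rmult_le_compat_l; lra).
  assert (2 * beta * (V t / C) * V t <= 2 * beta * P t * V t)
    by (apply Rmult_le_compat_r; [|apply Rmult_le_compat_l]; lra).
  lra.
Qed.

Lemma E0_lyapunov_le t : 0 <= t -> V t <= V 0.
Proof.
  intros Ht; apply (derive_nonpos_le V (fun s => V s * rate s)); [lra | |].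
  - intros s Hs; apply is_derive_E0_lyapunov; lra.
  - intros s Hs; eapply Rle_trans; [apply E0_lyapunov_derive_le; lra|].
    assert (0 <= 2 * beta / exp (Rabs (delta - beta) / rho))
      by (apply Rdiv_le_0_compat; [lra | apply exp_pos]).
    generalize (pow2_ge_0 (V s)); nra.
Qed.

Lemma P_le_E0_bound t : 0 <= t -> P t <= P 0 * exp (Rabs (delta - beta) / rho).
Proof.
  intros Ht; destruct (in_F_solution t Ht) as [HP [HA HS]]; destruct HF0 as [HP0 [HA0 HS0]].
  destruct (E0_lyapunov_bounds beta delta rho (P t) (A t) Hrho HP ltac:(lra)) as [HPV _].
  destruct (E0_lyapunov_bounds beta delta rho (P 0) (A 0) Hrho HP0 ltac:(lra)) as [_ HV0].
  generalize (E0_lyapunov_le t Ht); unfold V; lra.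
Qed.

Lemma is_lim_P_extinction : is_lim P p_infty 0.
Proof.
  destruct (Rle_lt_or_eq_dec 0 (P 0) (proj1 HF0)) as [HP0 | HP0].
  - set (c := 2 * beta / exp (Rabs (delta - beta) / rho)).
    assert (Hc : 0 < c) by (apply Rdiv_lt_0_compat; [lra | apply exp_pos]).
    assert (HV : forall t, 0 < t -> V t <= / (c * t)).
    { apply riccati_le with (dy := fun s => V s * rate s); [exact Hc | | |].
      - exact is_derive_E0_lyapunov.
      - intros t Ht; unfold V, E0_lyapunov.
        apply Rmult_lt_0_compat; [apply (P_sign t Ht), HP0 | apply exp_pos].
      - exact E0_lyapunov_derive_le. }
    apply (is_lim_of_sqr_sub_le P (fun t => / c * / t) 0 1); [|apply is_lim_inv_decay].
    intros t Ht; destruct (in_F_solution t ltac:(lra)) as [HP [HA HS]].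
    destruct (E0_lyapunov_bounds beta delta rho (P t) (A t) Hrho HP ltac:(lra)) as [HPV _].
    assert (P t <= / (c * t)) by (eapply Rle_trans; [exact HPV | apply HV; lra]).
    rewrite Rinv_mult in *; nra.
  - apply is_lim_P_of_P0_eq_0; symmetry; exact HP0.
Qed.

End Extinction.

Section Persistence.

Hypotheses (Hlt : mu < beta) (HP0 : 0 < P 0).

Let W s := E1_lyapunov beta mu delta rho (P s) (A s).
(* [X = 1/P - 1/p*] satisfies [X' = - (beta - mu + (delta - beta) A) X - (delta - beta) A / p*]. *)
Let dW s := 2 * (/ P s - / pstar beta mu) *
    (- ((beta - mu) + (delta - beta) * A s) * (/ P s - / pstar beta mu)
     - (delta - beta) / pstar beta mu * A s)
  + 2 * E1_weight beta mu delta rho * A s * (- (2 * delta * P s + rho) * A s).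

Lemma is_derive_E1_lyapunov t : 0 <= t -> is_derive W t (dW t).
Proof.
  intros Ht; destruct (Hsol t Ht); assert (HP := proj1 (proj2 (P_sign t Ht)) HP0).
  unfold W, dW, E1_lyapunov, pstar; derive_from_hyps; [lra|].
  unfold fP, fA; field; repeat split; lra.
Qed.

Lemma E1_lyapunov_decay (T : R) : 0 <= T ->
  (forall t, T <= t -> Rabs (delta - beta) * A t <= (beta - mu) / 2) ->
  forall t, T <= t -> W t <= W T * exp (- E1_rate beta mu rho * t - - E1_rate beta mu rho * T).
Proof.
  intros HT HA; apply (gronwall_le W dW (fun _ => - E1_rate beta mu rho) (fun s => - E1_rate beta mu rho * s));
    intros s Hs.
  - apply is_derive_E1_lyapunov; lra.
  - derive_from_hyps; ring.
  - destruct (in_F_solution s ltac:(lra)) as [HP [HAs _]].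
    assert (Hk : (beta - mu) / 2 <= (beta - mu) + (delta - beta) * A s).
    { assert (- Rabs (delta - beta) <= delta - beta)
        by (generalize (Rle_abs (- (delta - beta))); rewrite Rabs_Ropp; lra).
      specialize (HA s Hs); nra. }
    unfold dW, W, E1_lyapunov, E1_rate.
    apply quadratic_dissipation; auto; lra.
Qed.

Lemma sqr_sub_pstar_le t : 0 <= t -> (P t - pstar beta mu) ^ 2 <= (pstar beta mu / 2) ^ 2 * W t.
Proof.
  intros Ht; destruct (in_F_solution t Ht) as [HP [HA HS]].
  assert (Hq := pstar_bounds beta mu (conj Hmu Hlt)).
  eapply Rle_trans; [apply sqr_sub_le_sqr_inv_sub; [lra | split; [apply (P_sign t Ht), HP0 | lra]]|].
  unfold W, E1_lyapunov; apply Rmult_le_compat_l; [apply pow2_ge_0|].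
  generalize (E1_weight_ge1 beta mu delta rho Hlt Hrho) (pow2_ge_0 (A t)); nra.
Qed.

Lemma is_lim_P_persistence : is_lim P p_infty (pstar beta mu).
Proof.
  set (L := Rabs (delta - beta)); assert (HL : 0 <= L) by apply Rabs_pos.
  destruct (proj2 (is_lim_spec A p_infty 0) is_lim_A
    (mkposreal _ (Rdiv_lt_0_compat ((beta - mu) / 2) (L + 1) ltac:(lra) ltac:(lra)))) as [M HM].
  assert (HT0 := Rmax_l 0 (M + 1)); assert (HTM := Rmax_r 0 (M + 1)); set (T := Rmax 0 (M + 1)) in *.
  assert (HAT : forall t, T <= t -> L * A t <= (beta - mu) / 2).
  { intros t Ht; specialize (HM t ltac:(lra)); simpl in HM.
    rewrite Rminus_0_r in HM; apply Rabs_def2 in HM.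
    eapply Rle_trans; [apply Rmult_le_compat_l; [exact HL | left; apply HM]|].
    apply mul_div_succ_le; lra. }
  set (lam := E1_rate beta mu rho); assert (Hlam : 0 < lam) by (apply Rmin_glb_lt; lra).
  apply (is_lim_of_sqr_sub_le P
    (fun t => (pstar beta mu / 2) ^ 2 * (W T * exp (lam * T)) * exp (- lam * t)) _ T);
    [|apply is_lim_exp_decay, Hlam].
  intros t Ht; eapply Rle_trans; [apply sqr_sub_pstar_le; lra|].
  rewrite Rmult_assoc, Rmult_assoc; apply Rmult_le_compat_l; [apply pow2_ge_0|].
  rewrite <- exp_plus; replace (lam * T + - lam * t) with (- lam * t - - lam * T) by ring.
  apply E1_lyapunov_decay; assumption.
Qed.

Lemma E1_lyapunov_le : Rabs (delta - beta) * A 0 <= (beta - mu) / 2 -> forall t, 0 <= t -> W t <= W 0.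
Proof.
  intros HA0 t Ht.
  assert (HA : forall s, 0 <= s -> Rabs (delta - beta) * A s <= (beta - mu) / 2).
  { intros s Hs; eapply Rle_trans; [|exact HA0].
    apply Rmult_le_compat_l; [apply Rabs_pos | apply A_le_A0, Hs]. }
  eapply Rle_trans; [apply (E1_lyapunov_decay 0 (Rle_refl 0) HA t Ht)|].
  assert (0 <= W 0).
  { unfold W, E1_lyapunov; generalize (E1_weight_ge1 beta mu delta rho Hlt Hrho)
      (pow2_ge_0 (/ P 0 - / pstar beta mu)) (pow2_ge_0 (A 0)); nra. }
  assert (exp (- E1_rate beta mu rho * t - - E1_rate beta mu rho * 0) <= 1).
  { rewrite <- exp_0; apply exp_le_exp_of_le.
    assert (0 < E1_rate beta mu rho) by (apply Rmin_glb_lt; lra); nra. }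
  nra.
Qed.
End Persistence.

End Solution.

Section Stability.

Variables (beta mu delta rho : R).
Hypotheses (Hmu : 0 <= mu) (Hdelta : 0 <= delta) (Hrho : 0 < rho).

Lemma lyap_stable_E0 : 0 < beta -> beta <= mu -> lyap_stable beta mu delta rho 0 0.
Proof.
  intros Hbeta Hle eps Heps.
  set (C := exp (Rabs (delta - beta) / rho)).
  set (K := C ^ 2 + 1); assert (HK : 0 <= K) by (unfold K; generalize (pow2_ge_0 C); lra).
  set (d := eps / (K + 1)); assert (Hd : 0 < d) by (apply Rdiv_lt_0_compat; lra).
  exists d; split; [exact Hd|]; intros P A Hsol HF0 Hd0 t Ht.
  destruct (dist2_lt_abs_sub _ _ _ _ _ Hd0) as [HP0 HA0]; rewrite !Rminus_0_r in HP0, HA0.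
  destruct (in_F_solution beta mu delta rho P A Hmu Hrho Hsol HF0 t Ht) as [HP [HA _]].
  pose proof HF0 as [HP0' [HA0' _]]; rewrite !Rabs_right in HP0, HA0 by lra.
  assert (P t <= P 0 * C) by exact (P_le_E0_bound beta mu delta rho P A Hmu Hdelta Hrho Hsol HF0 Hbeta Hle t Ht).
  assert (A t <= A 0) by exact (A_le_A0 beta mu delta rho P A Hdelta Hrho Hsol HF0 t Ht).
  assert (0 < C) by apply exp_pos.
  apply (dist2_lt_of_sqr_le _ _ _ _ K d); [exact HK | exact Heps | split; [exact Hd | apply Rle_refl] |].
  assert (P t ^ 2 <= (d * C) ^ 2) by (apply pow_incr; nra).
  assert (A t ^ 2 <= d ^ 2) by (apply pow_incr; nra).
  rewrite !Rminus_0_r; replace (K * d ^ 2) with ((d * C) ^ 2 + d ^ 2) by (unfold K; ring); lra.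
Qed.

Lemma lyap_stable_E1 : mu < beta -> lyap_stable beta mu delta rho (pstar beta mu) 0.
Proof.
  intros Hlt eps Heps.
  assert (Hq := pstar_bounds beta mu (conj Hmu Hlt)); set (q := pstar beta mu) in *.
  assert (Hm := E1_weight_ge1 beta mu delta rho Hlt Hrho); set (m := E1_weight beta mu delta rho) in *.
  set (L := Rabs (delta - beta)); assert (HL : 0 <= L) by apply Rabs_pos.
  set (K := (q / 2) ^ 2 * ((2 / q ^ 2) ^ 2 + m) + 1).
  assert (HK : 0 <= K).
  { assert (0 <= (q / 2) ^ 2 * ((2 / q ^ 2) ^ 2 + m)); [|unfold K; lra].
    apply Rmult_le_pos; [apply pow2_ge_0 | generalize (pow2_ge_0 (2 / q ^ 2)); lra]. }
  set (d := Rmin (Rmin (q / 2) ((beta - mu) / 2 / (L + 1))) (eps / (K + 1))).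
  assert (Hd1 : d <= q / 2) by (eapply Rle_trans; [apply Rmin_l | apply Rmin_l]).
  assert (Hd2 : d <= (beta - mu) / 2 / (L + 1)) by (eapply Rle_trans; [apply Rmin_l | apply Rmin_r]).
  assert (Hd3 : d <= eps / (K + 1)) by apply Rmin_r.
  assert (Hd : 0 < d).
  { unfold d; repeat apply Rmin_glb_lt; try lra; apply Rdiv_lt_0_compat; lra. }
  exists d; split; [exact Hd|]; intros P A Hsol HF0 Hd0 t Ht.
  destruct (dist2_lt_abs_sub _ _ _ _ _ Hd0) as [HP0 HA0]; rewrite Rminus_0_r in HA0.
  pose proof HF0 as [_ [HA0' _]]; rewrite Rabs_right in HA0 by lra.
  assert (HP0q : q / 2 <= P 0) by (apply Rabs_def2 in HP0; lra).
  assert (HLA0 : L * A 0 <= (beta - mu) / 2).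
  { eapply Rle_trans; [apply Rmult_le_compat_l; [exact HL | left; eapply Rlt_le_trans; [exact HA0 | exact Hd2]]|].
    apply mul_div_succ_le; lra. }
  assert (HW := E1_lyapunov_le beta mu delta rho P A Hmu Hdelta Hrho Hsol HF0 Hlt ltac:(lra) HLA0 t Ht).
  assert (HPt := sqr_sub_pstar_le beta mu delta rho P A Hmu Hrho Hsol HF0 Hlt ltac:(lra) t Ht).
  assert (HAt := A_le_A0 beta mu delta rho P A Hdelta Hrho Hsol HF0 t Ht).
  destruct (in_F_solution beta mu delta rho P A Hmu Hrho Hsol HF0 t Ht) as [_ [HA _]].
  assert (HW0 := E1_lyapunov_le_near beta mu delta rho (P 0) (A 0) d (conj Hmu Hlt) Hrho HP0q
    (Rlt_le _ _ HP0) (conj HA0' (Rlt_le _ _ HA0))).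
  fold q m in HW, HPt, HW0 |- *.
  apply (dist2_lt_of_sqr_le _ _ _ _ K d); [exact HK | exact Heps | split; [exact Hd | exact Hd3] |].
  assert (A t ^ 2 <= d ^ 2) by (apply pow_incr; lra).
  assert ((q / 2) ^ 2 * E1_lyapunov beta mu delta rho (P t) (A t) <= (q / 2) ^ 2 * (((2 / q ^ 2) ^ 2 + m) * d ^ 2))
    by (apply Rmult_le_compat_l; [apply pow2_ge_0 | lra]).
  rewrite Rminus_0_r; unfold K; lra.
Qed.

Lemma glob_asymp_stable_E0 : 0 < beta -> beta <= mu -> glob_asymp_stable beta mu delta rho 0 0.
Proof.
  intros Hbeta Hle; split; [apply lyap_stable_E0; assumption|].
  intros P A Hsol HF0; split.
  - exact (is_lim_P_extinction beta mu delta rho P A Hmu Hdelta Hrho Hsol HF0 Hbeta Hle).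
  - exact (is_lim_A beta mu delta rho P A Hmu Hdelta Hrho Hsol HF0).
Qed.

Lemma loc_asymp_stable_E1 : mu < beta -> loc_asymp_stable beta mu delta rho (pstar beta mu) 0.
Proof.
  intros Hlt; split; [apply lyap_stable_E1, Hlt|].
  assert (Hq := pstar_bounds beta mu (conj Hmu Hlt)).
  exists (pstar beta mu / 2); split; [lra|]; intros P A Hsol HF0 Hd0.
  destruct (dist2_lt_abs_sub _ _ _ _ _ Hd0) as [HP0 _]; apply Rabs_def2 in HP0.
  split.
  - exact (is_lim_P_persistence beta mu delta rho P A Hmu Hdelta Hrho Hsol HF0 Hlt ltac:(lra)).
  - exact (is_lim_A beta mu delta rho P A Hmu Hdelta Hrho Hsol HF0).
Qed.

End Stability.

Lemma is_saddle_E0 (beta mu delta rho : R) : mu < beta -> 0 < rho ->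
  is_saddle (fP beta mu delta) (fA delta rho) 0 0.
Proof.
  intros Hlt Hrho.
  assert (J11 : jac11 (fP beta mu delta) 0 0 = beta - mu)
    by (apply is_derive_unique; unfold fP; auto_derive; [exact I | ring]).
  assert (J12 : jac12 (fP beta mu delta) 0 0 = 0)
    by (apply is_derive_unique; unfold fP; auto_derive; [exact I | ring]).
  assert (J21 : jac11 (fA delta rho) 0 0 = 0)
    by (apply is_derive_unique; unfold fA; auto_derive; [exact I | ring]).
  assert (J22 : jac12 (fA delta rho) 0 0 = - rho)
    by (apply is_derive_unique; unfold fA; auto_derive; [exact I | ring]).
  unfold is_saddle; rewrite J11, J12, J21, J22.
  split; [unfold fP; ring | split; [unfold fA; ring|]].
  exists (beta - mu), (- rho); repeat split; try lra.
  - exists 1, 0; split; [left; lra | split; ring].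
  - exists 0, 1; split; [right; lra | split; ring].
Qed.

Theorem proposition6p12 (alpha gamma mu delta rho beta : R)
  (Halpha : 0 < alpha) (Hgamma : 0 < gamma) (Hmu : 0 < mu)
  (Hdelta : 0 < delta) (Hrho : 0 < rho) (Hbeta : beta = alpha + gamma) :
  (* (i) *)
  (beta <= mu -> glob_asymp_stable beta mu delta rho 0 0)
  /\
  (* (ii) *)
  (mu < beta ->
     (forall P A : R -> R, is_solution beta mu delta rho P A ->
        in_F (P 0) (A 0) -> P 0 = 0 ->
        (forall t, 0 <= t -> P t = 0) /\
        is_lim P p_infty 0 /\ is_lim A p_infty 0)
     /\
     (forall P A : R -> R, is_solution beta mu delta rho P A ->
        in_F (P 0) (A 0) -> 0 < P 0 ->
        is_lim P p_infty ((1 - mu / beta) / 2) /\ is_lim A p_infty 0)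
     /\
     is_saddle (fP beta mu delta) (fA delta rho) 0 0
     /\
     loc_asymp_stable beta mu delta rho ((1 - mu / beta) / 2) 0).
Proof.
  apply Rlt_le in Hmu as Hmu0; apply Rlt_le in Hdelta as Hdelta0.
  split; [intros Hle; apply glob_asymp_stable_E0; lra|].
  intros Hlt; split; [|split; [|split]].
  - intros P A Hsol HF0 HP0; split; [|split].
    + intros t Ht; exact (proj2 (proj2 (P_sign beta mu delta rho P A Hsol t Ht)) HP0).
    + exact (is_lim_P_of_P0_eq_0 beta mu delta rho P A Hsol HP0).
    + exact (is_lim_A beta mu delta rho P A Hmu0 Hdelta0 Hrho Hsol HF0).
  - intros P A Hsol HF0 HP0; split.
    + exact (is_lim_P_persistence beta mu delta rho P A Hmu0 Hdelta0 Hrho Hsol HF0 Hlt HP0).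
    + exact (is_lim_A beta mu delta rho P A Hmu0 Hdelta0 Hrho Hsol HF0).
  - exact (is_saddle_E0 beta mu delta rho Hlt Hrho).
  - exact (loc_asymp_stable_E1 beta mu delta rho Hmu0 Hdelta0 Hrho Hlt).
Qed.
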